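(* Assume $\mu=\mathbb{E}[R]<\infty$. Then for every $\beta\in(0,1)$ there exists $\alpha=\alpha(\beta,\mu)<1$ such that $$\lim_{n\to\infty}\mathbb{P}(A_\alpha(\beta))=0,\qquad A_\alpha(\beta)=\{\exists\,x\neq y\in\mathcal{V}_\alpha:\ |x-y|<n^\beta\},$$ where $\mathcal{V}_\alpha=(\mathbb{Z}/n\mathbb{Z})\setminus X_{\alpha n\ln n/\mu}$.
   Context: Covering process: $R$ takes values in $\{1,2,\dots\}$, $f(r)=\mathbb{P}(R\ge r)$. On $\mathbb{Z}/n\mathbb{Z}$, let $(R_k)$ be i.i.d. copies of $R$, $(U_k)$ i.i.d. uniform on $\mathbb{Z}/n\mathbb{Z}$, independent; $\mathcal{O}_k=\{U_k,\dots,U_k+R_k-1\}$ (mod $n$), $C_0=\emptyset$, $C_k=C_{k-1}\cup\mathcal{O}_k$; with an independent rate-one Poisson process $N(t)$, $X_t=C_{N(t)}$. $|x-y|$ is the distance in the torus $\mathbb{Z}/n\mathbb{Z}$. The parameter $\alpha$ is taken in $(0,1)$. *)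

From HB Require Import structures.
From mathcomp Require Import all_boot all_order all_algebra.
From mathcomp Require Import all_classical all_reals all_analysis.
Set Implicit Arguments. Unset Strict Implicit. Unset Printing Implicit Defensive.
Import Order.TTheory GRing.Theory Num.Theory.
Import numFieldNormedType.Exports.
Local Open Scope ring_scope.

(* The torus Z/nZ is represented by 'I_n, with arithmetic mod n. *)

(* Arc O = {u, u+1, ..., u+r-1} (mod n). *)
Definition arc (n : nat) (u : 'I_n) (r : nat) : {set 'I_n} :=
  [set x : 'I_n | ((x + n - u) %% n < r)%N].

Definition tdist (n : nat) (x y : 'I_n) : nat :=
  minn ((x + n - y) %% n) ((y + n - x) %% n).

Section Covering.
Variable R : realType.
(* p r = P(R = r), a probability distribution on nat with p 0 = 0. *)
Variable p : nat -> R.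
Variable n : nat.

(* One step of the covering process: probability that C_k = B given
   C_{k-1} = A, where O_k = arc U_k R_k with U_k uniform on Z/nZ and
   R_k of law p, independent. *)
Definition step (A B : {set 'I_n}) : R :=
  \sum_(u : 'I_n) n%:R^-1 *
    limn (series (fun r => p r * (A :|: arc u r == B)%:R)).

(* Law of C_k : dist k B = P(C_k = B), C_0 = set0. *)
Fixpoint dist (k : nat) (B : {set 'I_n}) : R :=
  match k with
  | 0 => (B == finset.set0)%:R
  | k'.+1 => \sum_(A : {set 'I_n}) dist k' A * step A B
  end.

(* P(X_t \in E) where X_t = C_{N(t)}, N a rate-one Poisson process
   independent of everything else: P(N(t) = k) = e^{-t} t^k / k!. *)
Definition probX (t : R) (E : pred {set 'I_n}) : R :=
  limn (series (fun k => expR (- t) * t ^+ k / (k`!)%:R *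
                      \sum_(B : {set 'I_n} | E B) dist k B)).

(* The event A_alpha(beta) in terms of the covered set X:
   there exist x <> y uncovered (i.e. in V = Z/nZ \ X) with |x-y| < n^beta. *)
Definition close_pair (beta : R) (X : {set 'I_n}) : bool :=
  [exists x : 'I_n, exists y : 'I_n,
     [&& x != y, x \notin X, y \notin X &
         ((tdist x y)%:R < (n%:R : R) `^ beta)]].

Definition probA (mu alpha beta : R) : R :=
  probX (alpha * n%:R * ln (n%:R) / mu) (close_pair beta).

End Covering.

From Pilot Require Import Defs.
From HB Require Import structures.
From mathcomp Require Import all_boot all_order all_algebra.
From mathcomp Require Import all_classical all_reals all_analysis.
From mathcomp Require Import zify ring lra.
Set Implicit Arguments.
Unset Strict Implicit.
Unset Printing Implicit Defensive.

Import Order.TTheory GRing.Theory Num.Theory.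
Import numFieldNormedType.Exports.

(* Write s(x, y) for the probability that a single arc misses both
   x and y.  After Poissonisation, P(x, y both uncovered at time t) equals
   exp (-t (1 - s(x, y))), and n (1 - s(x, y)) is the expected number of
   starting points of an arc meeting {x, y}, which is at least
   sum_(r < K) P(R = r) (r + min(r, |x - y|)) when 2K <= n.  With
   t = alpha n ln n / mu, truncating the law of R at a large K turns this into
   n^-e1 for the at most 2Kn pairs with |x - y| < K (e1 ~ alpha (mu + 1) / mu)
   and n^-e2 for the other O(n^(1 + beta)) close pairs (e2 ~ 2 alpha).  A union
   bound over pairs then tends to 0 as soon as alpha > mu / (mu + 1) and
   alpha > (1 + beta) / 2. *)

Lemma card_lt_inj (T : finType) (f : T -> nat) m :
  injective f -> #|[set u | f u < m]| <= m.
Proof.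
move=> f_inj; rewrite cardE -(size_map f) -[leqRHS](size_iota 0 m).
apply: uniq_leq_size; first by rewrite (map_inj_uniq f_inj) enum_uniq.
by move=> j /mapP[u]; rewrite mem_enum inE mem_iota => um ->.
Qed.

Lemma card_lt_onto (T : finType) (f : T -> nat) m :
  (forall j, j < m -> exists u, f u = j) -> m <= #|[set u | f u < m]|.
Proof.
move=> f_onto; rewrite cardE -(size_map f) -[leqLHS](size_iota 0 m).
apply: uniq_leq_size; first exact: iota_uniq.
move=> j; rewrite mem_iota add0n => jm; have [u fu] := f_onto j jm.
by rewrite -fu map_f // mem_enum inE fu.
Qed.

Section Torus.
Variable n : nat.
Implicit Types (x y u : 'I_n) (r m : nat).

(* [x \in arc u r] unfolds to [offset x u < r]. *)
Definition offset x u : nat := (x + n - u) %% n.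

Lemma offsetE x u : offset x u = if u <= x then x - u else x + n - u.
Proof.
have := ltn_ord x; have := ltn_ord u => un xn; rewrite /offset.
case: (leqP u x) => ux; last by rewrite modn_small //; lia.
by rewrite -addnBAC // modnDr modn_small //; lia.
Qed.

Lemma tdistE x y : tdist x y = minn (offset x y) (offset y x).
Proof. by []. Qed.

Lemma tdistC x y : tdist x y = tdist y x.
Proof. by rewrite !tdistE minnC. Qed.

Lemma offset_inj x : injective (offset x).
Proof.
move=> u v; rewrite !offsetE => e; apply: val_inj; move: e.
have := ltn_ord x; have := ltn_ord u; have := ltn_ord v.
by case: (leqP u x); case: (leqP v x) => /=; lia.
Qed.

Lemma offset_injl u : injective (offset^~ u).
Proof.
move=> x y; rewrite /= !offsetE => e; apply: val_inj; move: e.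
have := ltn_ord x; have := ltn_ord y; have := ltn_ord u.
by case: (leqP u x); case: (leqP u y) => /=; lia.
Qed.

Lemma offset_onto x j : j < n -> exists u, offset x u = j.
Proof.
move=> jn; have xn := ltn_ord x.
have uP : (if j <= x then x - j else x + n - j) < n by case: (leqP j x) => /=; lia.
exists (Ordinal uP); rewrite offsetE /=.
by case: (leqP j x) => jx /=; [case: (leqP (x - j) x) | case: (leqP (x + n - j) x)] => /=; lia.
Qed.

Lemma card_offset_lt x m : m <= n -> #|[set u | offset x u < m]| = m.
Proof.
move=> mn; apply/eqP; rewrite eqn_leq card_lt_inj ?card_lt_onto //.
  by move=> j jm; apply: offset_onto; lia.
exact: offset_inj.
Qed.

Lemma tdist_gt0 x y : x != y -> 0 < tdist x y.
Proof.
move=> /eqP xy; rewrite tdistE !offsetE.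
have := ltn_ord x; have := ltn_ord y; have : (x : nat) <> y by move=> /val_inj.
by case: (leqP x y); case: (leqP y x) => /=; lia.
Qed.

Lemma card_tdist_lt x m : #|[set y | tdist x y < m]| <= m.*2.
Proof.
have sub : [set y | tdist x y < m] \subset
    [set y | offset x y < m] :|: [set y | offset y x < m].
  by apply/fintype.subsetP => y; rewrite !inE tdistE; lia.
apply: leq_trans (subset_leq_card sub) _; apply: leq_trans (leq_card_setU _ _) _.
by rewrite -addnn leq_add // card_lt_inj //; [exact: offset_inj | exact: offset_injl].
Qed.

Definition hits x y r := [set u | (x \in Defs.arc u r) || (y \in Defs.arc u r)].

Lemma hitsC x y r : hits x y r = hits y x r.
Proof. by apply/setP => u; rewrite !inE orbC. Qed.

Lemma card_hits_ge_offset x y r m : r <= n -> m <= r ->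
    (forall u, offset y u < m -> r <= offset x u) -> r + m <= #|hits x y r|.
Proof.
move=> rn mr far.
have disj : [disjoint [set u | offset x u < r] & [set u | offset y u < m]].
  by apply/pred0P => u /=; rewrite !inE; apply/negP => /andP[ux /far]; lia.
have sub : [set u | offset x u < r] :|: [set u | offset y u < m] \subset hits x y r.
  by apply/fintype.subsetP => u; rewrite !inE -!/(offset _ _); lia.
apply: leq_trans (subset_leq_card sub).
by rewrite cardsU (disjoint_setI0 disj) cards0 subn0 !card_offset_lt //; lia.
Qed.

Lemma card_hits_ge x y r :
  x != y -> r.*2 <= n -> r + minn r (tdist x y) <= #|hits x y r|.
Proof.
wlog le_yx : x y / offset y x <= offset x y => [wlog_xy | /eqP xy r2].
  case: (leqP (offset y x) (offset x y)) => [|/ltnW]; first exact: wlog_xy.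
  by rewrite hitsC tdistC eq_sym; apply: wlog_xy.
have {}xy : (x : nat) <> y by move=> /val_inj.
apply: card_hits_ge_offset; [lia | lia |] => u.
move: le_yx; rewrite tdistE !offsetE.
have := ltn_ord x; have := ltn_ord y; have := ltn_ord u.
by case: (leqP u y); case: (leqP u x); case: (leqP x y); case: (leqP y x) => /=; lia.
Qed.

End Torus.

Local Open Scope classical_set_scope.
Local Open Scope set_scope.
Local Open Scope ring_scope.

Lemma sum_indicator_card (T : finType) (R : nzSemiRingType) (b : pred T) :
  \sum_u (b u)%:R = #|[set u | b u]|%:R :> R.
Proof.
rewrite -sum1_card natr_sum [RHS]big_mkcond /=; apply: eq_bigr => u _.
by rewrite inE; case: (b u).
Qed.

Section TorusCounting.
Variables (R : realType) (n : nat).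

Lemma card_tdist_ltr (x : 'I_n) (X : R) : 0 <= X ->
  #|[set y | (tdist x y)%:R < X]|%:R <= 2 * (X + 1).
Proof.
move=> X_ge0.
have sub : [set y | (tdist x y)%:R < X] \subset [set y | (tdist x y < (Num.trunc X).+1)%N].
  by apply/fintype.subsetP => y; rewrite !inE ltnS truncn_ge_nat // => /ltW.
apply: le_trans (_ : (Num.trunc X).+1.*2%:R <= _).
  by rewrite ler_nat; apply: leq_trans (subset_leq_card sub) (card_tdist_lt _ _).
by rewrite -mul2n natrM ler_wpM2l // -natr1 lerD2r truncn_le.
Qed.

Lemma sum_tdist_indicators_le (K : nat) (X a b : R) : 0 <= X -> 0 <= a -> 0 <= b ->
  \sum_(xy : 'I_n * 'I_n)
    (((tdist xy.1 xy.2 < K)%N)%:R * a + ((tdist xy.1 xy.2)%:R < X :> R)%:R * b) <=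
  n%:R * (2 * K%:R * a + 2 * (X + 1) * b).
Proof.
move=> X_ge0 a_ge0 b_ge0.
rewrite -(pair_bigA _ (fun x y => ((tdist x y < K)%N)%:R * a + ((tdist x y)%:R < X :> R)%:R * b)) /=.
rewrite [leRHS]mulr_natl -[in leRHS](card_ord n) -sumr_const; apply: ler_sum => x _.
rewrite big_split /= -!mulr_suml !sum_indicator_card.
apply: lerD; apply: ler_wpM2r => //; last exact: card_tdist_ltr.
by rewrite -natrM ler_nat mul2n card_tdist_lt.
Qed.

End TorusCounting.

Section SeriesFacts.
Variable R : realType.
Implicit Types f : nat -> R.

Lemma cvg_series_sum (I : Type) (s : seq I) (P : pred I) (f : I -> nat -> R) :
  (forall i, cvgn (series (f i))) ->
  series (fun r => \sum_(i <- s | P i) f i r) @ \oo -->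
    \sum_(i <- s | P i) limn (series (f i)).
Proof.
move=> cvg_f.
have -> : series (fun r => \sum_(i <- s | P i) f i r) =
    (fun N => \sum_(i <- s | P i) series (f i) N).
  by apply/funext => N; rewrite /series /=; exact: exchange_big.
by apply: cvg_big => [|i _]; [exact: add_continuous | exact: cvg_f].
Qed.

Lemma is_cvg_series_sum (I : Type) (s : seq I) (P : pred I) (f : I -> nat -> R) :
  (forall i, cvgn (series (f i))) -> cvgn (series (fun r => \sum_(i <- s | P i) f i r)).
Proof. by move=> cvg_f; apply/cvg_ex; eexists; apply: cvg_series_sum. Qed.

Lemma lim_series_sum (I : Type) (s : seq I) (P : pred I) (f : I -> nat -> R) :
  (forall i, cvgn (series (f i))) ->
  limn (series (fun r => \sum_(i <- s | P i) f i r)) =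
    \sum_(i <- s | P i) limn (series (f i)).
Proof. by move=> cvg_f; apply/cvg_lim/cvg_series_sum. Qed.

Lemma series_le_lim f : (forall r, 0 <= f r) -> cvgn (series f) ->
  forall K, series f K <= limn (series f).
Proof.
move=> f_ge0 cvg_f K; apply: nondecreasing_cvgn_le cvg_f K.
by apply: (@nondecreasing_series _ f xpredT 0%N) => r _ _; exact: f_ge0.
Qed.

Lemma lim_series_ge0 f : (forall r, 0 <= f r) -> cvgn (series f) ->
  0 <= limn (series f).
Proof.
move=> f_ge0 cvg_f; apply: le_trans (series_le_lim f_ge0 cvg_f 0).
by rewrite /series /= big_geq.
Qed.

End SeriesFacts.

Section Asymptotics.
Variable R : realType.

Lemma natr_powRE (n : nat) (c : R) : (0 < n)%N -> n%:R `^ c = expR (c * ln n%:R).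
Proof. by move=> n_gt0; rewrite /powR pnatr_eq0 gtn_eqF. Qed.

Lemma cvg_natr_powR_neg (c : R) : c < 0 -> (fun n : nat => n%:R `^ c) @ \oo --> 0.
Proof.
move=> c_lt0.
have ln_oo : (fun n : nat => - c * ln n%:R) @ \oo --> +oo.
  apply/cvgryPge => A; near=> n.
  rewrite -ler_pdivrMl ?oppr_gt0 // -[leLHS]expRK ler_ln ?posrE ?expR_gt0 //.
    by near: n; apply: nbhs_infty_ger.
  by apply: lt_le_trans (expR_gt0 ((- c)^-1 * A)) _; near: n; apply: nbhs_infty_ger.
apply: cvg_trans (cvg_comp _ _ ln_oo (@cvgr_expR R)); apply: near_eq_cvg.
near=> n; rewrite /= (natr_powRE c) ?mulNr ?opprK //.
by near: n; exact: nbhs_infty_gt.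
Unshelve. all: by end_near. Qed.

Lemma cvg_probA_majorant (K : nat) (beta e1 e2 : R) :
  0 <= beta -> 1 < e1 -> 1 + beta < e2 ->
  (fun n : nat => n%:R * (2 * K%:R * n%:R `^ (- e1) +
                          2 * (n%:R `^ beta + 1) * n%:R `^ (- e2))) @ \oo --> 0.
Proof.
move=> beta_ge0 e1_gt1 e2_gt.
have lim0 : (fun n : nat => 2 * K%:R * n%:R `^ (1 - e1) + 2 * n%:R `^ (1 + beta - e2) +
    2 * n%:R `^ (1 - e2)) @ \oo --> 0.
  rewrite (_ : 0 = 2 * K%:R * 0 + 2 * 0 + 2 * 0); last by rewrite !mulr0 !addr0.
  by apply: cvgD; first apply: cvgD; apply: cvgMr; apply: cvg_natr_powR_neg; lra.
apply: cvg_trans lim0; apply: near_eq_cvg; near=> n.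
have n_neq0 : n%:R != 0 :> R by rewrite pnatr_eq0 gtn_eqF //; near: n; exact: nbhs_infty_gt.
rewrite /= !powRD ?powRr1 ?n_neq0 ?implybT ?ler0n //; ring.
Unshelve. all: by end_near. Qed.

End Asymptotics.

Lemma sum_mul_eqb (T : finType) (R : nzRingType) (P : pred T) (C : T) (c : R) :
  \sum_(B | P B) c * (C == B)%:R = c * (P C)%:R.
Proof.
rewrite big_mkcond (bigD1 C) //= eqxx big1 ?addr0; first by case: (P C); rewrite ?mulr1 ?mulr0.
by move=> B; rewrite eq_sym => /negbTE ->; case: ifP; rewrite ?mulr0.
Qed.

Section CoveringProcess.
Variables (R : realType) (p : nat -> R) (n : nat).
Hypothesis p_ge0 : forall r, 0 <= p r.
Hypothesis p_sum1 : series p @ \oo --> (1 : R).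
Implicit Types (x y u : 'I_n) (A B : {set 'I_n}) (b : nat -> bool).

Lemma is_cvg_series_pmask b : cvgn (series (fun r => p r * (b r)%:R)).
Proof.
apply: (@series_le_cvg _ _ p) => [r|r|r|]; rewrite ?p_ge0 //.
- by rewrite mulr_ge0.
- by case: (b r); rewrite ?mulr1 ?mulr0.
- by apply/cvg_ex; exists 1.
Qed.

Lemma lim_series_pmask_ge0 b : 0 <= limn (series (fun r => p r * (b r)%:R)).
Proof.
apply: lim_series_ge0; last exact: is_cvg_series_pmask.
by move=> r; rewrite mulr_ge0.
Qed.

Lemma step_ge0 A B : 0 <= step p A B.
Proof. by apply: sumr_ge0 => u _; rewrite mulr_ge0 ?invr_ge0 ?lim_series_pmask_ge0. Qed.

Lemma dist_ge0 k B : 0 <= dist p k B.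
Proof.
elim: k B => [|k IHk] B /=; first by rewrite ler0n.
by apply: sumr_ge0 => A _; rewrite mulr_ge0 ?step_ge0.
Qed.

Definition avoids x y B := (x \notin B) && (y \notin B).

Definition miss_prob x y :=
  \sum_u n%:R^-1 * limn (series (fun r => p r * (avoids x y (Defs.arc u r))%:R)).

Lemma avoidsU x y A B : avoids x y (A :|: B) = avoids x y A && avoids x y B.
Proof. by rewrite /avoids !inE !negb_or andbACA. Qed.

Lemma miss_prob_ge0 x y : 0 <= miss_prob x y.
Proof. by apply: sumr_ge0 => u _; rewrite mulr_ge0 ?invr_ge0 ?lim_series_pmask_ge0. Qed.

Lemma sum_step_avoids x y A :
  \sum_(B | avoids x y B) step p A B = (avoids x y A)%:R * miss_prob x y.
Proof.
rewrite /step exchange_big /= /miss_prob mulr_sumr; apply: eq_bigr => u _.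
rewrite -mulr_sumr mulrCA; congr (_ * _).
rewrite -lim_series_sum => [|B]; last exact: is_cvg_series_pmask.
under eq_fun do rewrite sum_mul_eqb avoidsU.
case: (avoids x y A); rewrite ?mul1r ?mul0r //.
under eq_fun do rewrite /= mulr0.
by rewrite (_ : series _ = fun=> 0) ?lim_cst //; apply/funext => N; rewrite /series /= big1.
Qed.

Lemma sum_dist_avoids x y k :
  \sum_(B | avoids x y B) dist p k B = miss_prob x y ^+ k.
Proof.
elim: k => [|k IHk] /=.
  under eq_bigr do rewrite -[_%:R]mul1r eq_sym.
  by rewrite sum_mul_eqb /avoids !inE mul1r.
rewrite exchange_big /=.
under eq_bigr do rewrite -mulr_sumr sum_step_avoids.
rewrite exprSr -IHk mulr_suml [RHS]big_mkcond /=.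
by apply: eq_bigr => A _; case: (avoids x y A); rewrite ?mul1r ?mul0r ?mulr0.
Qed.

Lemma probX_le_sum_pow (t : R) (E : pred {set 'I_n}) (I : finType) (P : pred I)
    (s : I -> R) :
  0 <= t -> (forall i, 0 <= s i) ->
  (forall k, \sum_(B | E B) dist p k B <= \sum_(i | P i) s i ^+ k) ->
  0 <= probX p t E <= \sum_(i | P i) expR (- (t * (1 - s i))).
Proof.
move=> t_ge0 s_ge0 E_le; rewrite /probX.
set f := fun k => _.
pose g i k := expR (- t) * exp_coeff (t * s i) k.
have gE i : g i = expR (- t) *: exp_coeff (t * s i) by [].
have cvg_g i : cvgn (series (g i)).
  by rewrite gE; exact/is_cvg_seriesZ/is_cvg_series_exp_coeff.
have f_ge0 k : 0 <= f k.
  by rewrite mulr_ge0 ?mulr_ge0 ?expR_ge0 ?exprn_ge0 ?invr_ge0 ?sumr_ge0 // => B _; rewrite dist_ge0.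
have f_le k : f k <= \sum_(i | P i) g i k.
  rewrite /f /g; apply: le_trans (ler_wpM2l _ (E_le k)) _.
    by rewrite mulr_ge0 ?mulr_ge0 ?expR_ge0 ?exprn_ge0 ?invr_ge0.
  rewrite mulr_sumr; apply: ler_sum => i _; rewrite le_eqVlt; apply/predU1P; left.
  by rewrite /g /exp_coeff /= exprMn; ring.
have cvg_G := @is_cvg_series_sum _ _ (index_enum I) P _ cvg_g.
have cvg_f : cvgn (series f).
  apply: series_le_cvg f_ge0 _ f_le cvg_G => k.
  by apply: sumr_ge0 => i _; rewrite /g /= mulr_ge0 ?expR_ge0 ?exp_coeff_ge0 ?mulr_ge0.
rewrite lim_series_ge0 //=; apply: le_trans (lim_series_le cvg_f cvg_G f_le) _.
rewrite lim_series_sum //; apply: ler_sum => i _; rewrite le_eqVlt; apply/predU1P; left.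
rewrite gE lim_seriesZ; last exact: is_cvg_series_exp_coeff.
by change (expR (- t) * expR (t * s i) = expR (- (t * (1 - s i))));
  rewrite -expRD; congr expR; ring.
Qed.

Lemma card_hitsE x y r :
  #|hits x y r|%:R = \sum_u (~~ avoids x y (Defs.arc u r))%:R :> R.
Proof.
rewrite sum_indicator_card; congr _%:R; apply: eq_card => u /=.
by rewrite /hits /avoids !inE negb_and !negbK.
Qed.

Lemma series_hitsE x y : series (fun r => p r * #|hits x y r|%:R) =
  series (fun r => \sum_u p r * (~~ avoids x y (Defs.arc u r))%:R).
Proof. by apply/funext => N; apply: eq_bigr => r _; rewrite card_hitsE mulr_sumr. Qed.

Lemma is_cvg_series_hits x y : cvgn (series (fun r => p r * #|hits x y r|%:R)).
Proof.
rewrite series_hitsE; apply: is_cvg_series_sum => u.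
exact: is_cvg_series_pmask.
Qed.

Lemma one_sub_miss_prob x y : (0 < n)%N ->
  1 - miss_prob x y = n%:R^-1 * limn (series (fun r => p r * #|hits x y r|%:R)).
Proof.
move=> n_gt0.
have avoid_hit u : limn (series (fun r => p r * (avoids x y (Defs.arc u r))%:R)) =
    1 - limn (series (fun r => p r * (~~ avoids x y (Defs.arc u r))%:R)).
  have cvg_p : cvgn (series p) by apply/cvg_ex; exists 1.
  rewrite -[X in X - _](cvg_lim _ p_sum1) // -lim_seriesB //; last exact: is_cvg_series_pmask.
  congr (limn (series _)); apply/funext => r; rewrite !fctE.
  by case: avoids => /=; rewrite ?mulr1 ?mulr0 ?subr0 ?subrr.
rewrite series_hitsE lim_series_sum => [|u]; last exact: is_cvg_series_pmask.
rewrite /miss_prob; under eq_bigr do rewrite avoid_hit mulrBr mulr1.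
rewrite sumrB sumr_const card_ord -mulr_sumr -[_ *+ n]mulr_natr mulVf ?pnatr_eq0 ?gtn_eqF //.
by rewrite opprB addrC subrK.
Qed.

Lemma one_sub_miss_prob_ge x y K : (0 < n)%N -> x != y -> (K.*2 <= n)%N ->
  n%:R^-1 * \sum_(r < K) p r * (r + minn r (tdist x y))%:R <= 1 - miss_prob x y.
Proof.
move=> n_gt0 xy le_Kn; rewrite one_sub_miss_prob // ler_wpM2l ?invr_ge0 //.
apply: le_trans (series_le_lim _ (@is_cvg_series_hits x y) K) => [|r].
  rewrite seriesEord; apply: ler_sum => r _; rewrite ler_wpM2l // ler_nat.
  by apply: card_hits_ge => //; have := ltn_ord r; lia.
by rewrite mulr_ge0.
Qed.

Lemma probX_close_pair_le (beta t : R) : 0 <= t ->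
  0 <= probX p t (@close_pair _ n beta) <=
  \sum_(xy | (xy.1 != xy.2) && ((tdist xy.1 xy.2)%:R < n%:R `^ beta))
    expR (- (t * (1 - miss_prob xy.1 xy.2))).
Proof.
move=> t_ge0; apply: probX_le_sum_pow => // [[x y]|k]; first exact: miss_prob_ge0.
under [leRHS]eq_bigr do rewrite -sum_dist_avoids big_mkcond.
rewrite exchange_big /= big_mkcond /=; apply: ler_sum => B _.
have term_ge0 (uv : 'I_n * 'I_n) :
    0 <= (if avoids uv.1 uv.2 B then dist p k B else 0).
  by case: ifP => _; rewrite ?dist_ge0 ?lexx.
case: ifP => [/existsP[x /existsP[y /and4P[xy xB yB close]]]|_]; last first.
  by apply: sumr_ge0 => uv _; exact: term_ge0.
rewrite (bigD1 (x, y)) /=; last by rewrite xy close.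
by rewrite /avoids xB yB /= lerDl; apply: sumr_ge0 => uv _; exact: term_ge0.
Qed.

Lemma truncated_hit_mass_ge K d : p 0%N = 0 -> (0 < d)%N ->
  (if (d < K)%N then series (fun r => r%:R * p r) K + series p K
   else 2 * series (fun r => r%:R * p r) K) <= \sum_(r < K) p r * (r + minn r d)%:R.
Proof.
move=> p0 d_gt0; rewrite !seriesEord /=; case: ltnP => le_dK.
  rewrite -big_split /=; apply: ler_sum => r _.
  case: (posnP r) => [->|r_gt0]; first by rewrite p0 !mulr0 add0r.
  have : 1 <= (minn r d)%:R :> R by rewrite ler1n leq_min r_gt0.
  by rewrite natrD; have := p_ge0 r; nra.
rewrite mulr_sumr; apply: ler_sum => r _.
rewrite (minn_idPl _); last exact: leq_trans (ltnW (ltn_ord r)) le_dK.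
by rewrite le_eqVlt; apply/predU1P; left; rewrite natrD; ring.
Qed.

Lemma probA_le (mu alpha beta e1 e2 : R) K :
  p 0%N = 0 -> 0 < alpha -> 0 < mu -> (2 <= n)%N -> (K.*2 <= n)%N ->
  e1 = alpha * (series (fun r => r%:R * p r) K + series p K) / mu ->
  e2 = alpha * (2 * series (fun r => r%:R * p r) K) / mu ->
  0 <= probA p n mu alpha beta <=
  n%:R * (2 * K%:R * n%:R `^ (- e1) + 2 * (n%:R `^ beta + 1) * n%:R `^ (- e2)).
Proof.
move=> p0 alpha_gt0 mu_gt0 n_ge2 le_Kn e1E e2E.
have n_gt0 : (0 < n)%N by apply: leq_trans n_ge2.
have ln_ge0 : 0 <= ln (n%:R : R) by rewrite ln_ge0 // ler1n ltnW.
set t := alpha * n%:R * ln n%:R / mu.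
have t_ge0 : 0 <= t by rewrite /t divr_ge0 ?mulr_ge0 ?ler0n ?(ltW alpha_gt0) ?(ltW mu_gt0).
have tn : t * n%:R^-1 = alpha * ln n%:R / mu.
  by rewrite /t; field; rewrite pnatr_eq0 gtn_eqF // lt0r_neq0.
have /andP[-> le_sum] := probX_close_pair_le beta t_ge0.
apply: le_trans le_sum (le_trans _ (sum_tdist_indicators_le n K (powR_ge0 _ _)
  (powR_ge0 _ _) (powR_ge0 _ _))).
rewrite [leLHS]big_mkcond; apply: ler_sum => -[x y] _ /=.
case: ifP => [/andP[xy close]|_]; last by rewrite addr_ge0 ?mulr_ge0 ?powR_ge0.
apply: (@le_trans _ _ (n%:R `^ (- if (tdist x y < K)%N then e1 else e2))); last first.
  by case: ifP => _; rewrite close ?mul1r ?mul0r ?add0r ?lerDl ?mulr_ge0 ?powR_ge0.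
have e_ln : (if (tdist x y < K)%N then e1 else e2) * ln n%:R = t * n%:R^-1 *
    (if (tdist x y < K)%N then series (fun r => r%:R * p r) K + series p K
     else 2 * series (fun r => r%:R * p r) K).
  by rewrite tn e1E e2E; case: ifP => _; field; exact: lt0r_neq0.
rewrite natr_powRE // ler_expR mulNr lerN2 e_ln -mulrA ler_wpM2l //.
apply: le_trans (one_sub_miss_prob_ge n_gt0 xy le_Kn).
by rewrite ler_wpM2l ?invr_ge0 ?truncated_hit_mass_ge ?tdist_gt0.
Qed.

End CoveringProcess.

Section Tuning.
Variable R : realType.

Lemma exists_alpha (beta m : R) : 0 < beta < 1 -> 0 <= m ->
  exists alpha : R, [/\ 0 < alpha < 1, m < alpha * (m + 1) & 1 + beta < 2 * alpha].
Proof.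
move=> /andP[beta_gt0 beta_lt1] m_ge0; pose g := (1 - beta) / (2 * (m + 2)).
have g_gt0 : 0 < g by rewrite divr_gt0 //; lra.
have gE : g * (2 * (m + 2)) = 1 - beta by rewrite divfK //; lra.
by exists (1 - g); split; [apply/andP; split | |]; nra.
Qed.

Lemma mean_ge1 (p : nat -> R) (mu : R) : p 0%N = 0 -> (forall r, 0 <= p r) ->
  series p @ \oo --> (1 : R) -> series (fun r => r%:R * p r) @ \oo --> mu -> 1 <= mu.
Proof.
move=> p0 p_ge0 p_sum1 p_mean.
have p_le r : p r <= r%:R * p r.
  case: r => [|r]; first by rewrite p0 mulr0.
  by rewrite ler_peMl // ler1n.
rewrite -(cvg_lim _ p_sum1) // -(cvg_lim _ p_mean) //.
by apply: lim_series_le p_le; apply/cvg_ex; eexists; eassumption.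
Qed.

Lemma exists_truncation (p : nat -> R) (alpha beta mu : R) :
  0 < mu -> mu < alpha * (mu + 1) -> 1 + beta < 2 * alpha ->
  series p @ \oo --> (1 : R) -> series (fun r => r%:R * p r) @ \oo --> mu ->
  exists K, 1 < alpha * (series (fun r => r%:R * p r) K + series p K) / mu /\
            1 + beta < alpha * (2 * series (fun r => r%:R * p r) K) / mu.
Proof.
move=> mu_gt0 alpha_mu alpha_beta p_sum1 p_mean.
have e1_lim : alpha * (series (fun r => r%:R * p r) K + series p K) / mu @[K --> \oo] -->
    alpha * (mu + 1) / mu.
  by apply: cvgMl; apply: cvgMr; apply: cvgD.
have e2_lim : alpha * (2 * series (fun r => r%:R * p r) K) / mu @[K --> \oo] -->
    alpha * (2 * mu) / mu.
  by apply: cvgMl; apply: cvgMr; apply: cvgMr.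
have e1_gt : 1 < alpha * (mu + 1) / mu by rewrite ltr_pdivlMr // mul1r.
have e2_gt : 1 + beta < alpha * (2 * mu) / mu.
  by rewrite mulrA mulfK ?gt_eqF // mulrC.
have [K [e1K e2K]] :=
  filter_ex (filterI (cvgr_gt _ e1_lim _ e1_gt) (cvgr_gt _ e2_lim _ e2_gt)).
by exists K.
Qed.

End Tuning.

Theorem mainTheorem6 (R : realType) (beta mu : R) :
  0 < beta < 1 ->
  exists alpha : R, 0 < alpha < 1 /\
    forall p : nat -> R,
      p 0%N = 0 ->
      (forall r, 0 <= p r) ->
      series p @ \oo --> (1 : R) ->
      series (fun r => r%:R * p r) @ \oo --> (mu : R) ->
      (fun n => probA p n mu alpha beta) @ \oo --> (0 : R).
Proof.
move=> beta01; have [beta_gt0 _] := andP beta01.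
have [alpha [alpha01 alpha_mu alpha_beta]] := exists_alpha beta01 (normr_ge0 mu).
exists alpha; split => // p p0 p_ge0 p_sum1 p_mean.
have mu_gt0 : 0 < mu := lt_le_trans ltr01 (mean_ge1 p0 p_ge0 p_sum1 p_mean).
rewrite ger0_norm ?(ltW mu_gt0) in alpha_mu.
have [K [e1_gt1 e2_gt]] := exists_truncation mu_gt0 alpha_mu alpha_beta p_sum1 p_mean.
apply: squeeze_cvgr (cvg_cst 0) (cvg_probA_majorant K (ltW beta_gt0) e1_gt1 e2_gt).
near=> n; apply: probA_le => //; first by case/andP: alpha01.
- by near: n; exact: nbhs_infty_ge.
- by near: n; exact: nbhs_infty_ge.
Unshelve. all: by end_near. Qed.
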